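(* Consider the opinion--action model described in the context with $\phi\in(0,1)$ and arbitrary initial values $x_i(0),y_i(0)\in[0,1]$. Suppose there exists a finite time $T>0$ such that for all integers $t\ge T$ the digraph $\mathcal{G}(P(t))$ is strongly connected. Then for every $i\in\{1,\dots,2n\}$ the limit $z_i^\ast=\lim_{t\to\infty}z_i(t)$ exists, and $z_i^\ast=z_j^\ast$ for all $i,j\in\{1,\dots,2n\}$.
   Context: Fix an integer $n\ge 1$, agent set $\mathcal{V}=\{1,\dots,n\}$, a confidence threshold $\epsilon\in[0,1]$ and a decision weight $\phi\in[0,1]$. Each agent $i$ has opinion $x_i(t)\in[0,1]$ and action $y_i(t)\in[0,1]$. For $t\in\mathbb{Z}_{\ge0}$ the model evolves by: $\mathcal{N}_i(t)=\{j\in\mathcal{V}\mid j\neq i,\ |x_i(t)-y_j(t)|\le\epsilon\}$; $x_i(t+1)=\frac{x_i(t)+\sum_{j\in\mathcal{N}_i(t)}y_j(t)}{|\mathcal{N}_i(t)|+1}$; $y_i(t+1)=\phi\,x_i(t+1)+(1-\phi)\,y_{\mathrm{avg}}(t)$ with $y_{\mathrm{avg}}(t)=\frac1n\sum_{k=1}^n y_k(t)$. For $t\ge1$ the augmented state is $\mathbf{z}(t)\in\mathbb{R}^{2n}$ with $z_i(t)=x_i(t)$ and $z_{n+i}(t)=y_i(t-1)$; it satisfies $\mathbf{z}(t+1)=P(t)\mathbf{z}(t)$, where $P(t)=\begin{bmatrix}P_{11}(t)&P_{12}(t)\\ P_{21}&P_{22}\end{bmatrix}$ with $n\times n$ blocks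 $[P_{11}(t)]_{ij}=\frac{1}{|\mathcal{N}_i(t)|+1}$ if $j=i$, $\frac{\phi}{|\mathcal{N}_i(t)|+1}$ if $j\in\mathcal{N}_i(t)$, $0$ otherwise; $[P_{12}(t)]_{ij}=\frac{(1-\phi)|\mathcal{N}_i(t)|}{(|\mathcal{N}_i(t)|+1)n}$ for all $i,j$; $P_{21}=\phi I_n$; $P_{22}=\frac{1-\phi}{n}\mathbf{1}_n\mathbf{1}_n^\top$. For a nonnegative $A\in\mathbb{R}^{m\times m}$, $\mathcal{G}(A)$ is the digraph on $\{1,\dots,m\}$ with a directed edge from $j$ to $i$ iff $a_{ij}>0$. *)

From HB Require Import structures.
From mathcomp Require Import all_boot all_order all_algebra.
From mathcomp Require Import all_classical all_reals all_analysis.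
Set Implicit Arguments. Unset Strict Implicit. Unset Printing Implicit Defensive.
Import Order.TTheory GRing.Theory Num.Theory.
Local Open Scope ring_scope.

Section OpinionAction.
Variables (R : realType) (n : nat) (eps phi : R).

(* a state (x(t), y(t)) : opinions and actions of the n agents *)
Definition state := (('I_n -> R) * ('I_n -> R))%type.

Definition nbhd (s : state) (i : 'I_n) : {set 'I_n} :=
  [set j | (j != i) && (`|s.1 i - s.2 j| <= eps)].

Definition yavg (s : state) : R := (\sum_(k < n) s.2 k) / n%:R.

Definition step (s : state) : state :=
  let x' := fun i => (s.1 i + \sum_(j in nbhd s i) s.2 j) / (#|nbhd s i|%:R + 1) in
  (x', fun i => phi * x' i + (1 - phi) * yavg s).

Definition traj (x0 y0 : 'I_n -> R) (t : nat) : state := iter t step (x0, y0).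

(* augmented state z(t) in R^(2n): z_i(t) = x_i(t), z_(n+i)(t) = y_i(t-1)
   (only meaningful for t >= 1; at t = 0 it uses y(0) by truncated subtraction) *)
Definition zstate (x0 y0 : 'I_n -> R) (t : nat) (k : 'I_(n + n)) : R :=
  match fintype.split k with
  | inl i => (traj x0 y0 t).1 i
  | inr i => (traj x0 y0 t.-1).2 i
  end.

Definition P11 (s : state) : 'M[R]_n :=
  \matrix_(i, j) (if j == i then 1 / (#|nbhd s i|%:R + 1)
                  else if j \in nbhd s i then phi / (#|nbhd s i|%:R + 1) else 0).
Definition P12 (s : state) : 'M[R]_n :=
  \matrix_(i, j) ((1 - phi) * #|nbhd s i|%:R / ((#|nbhd s i|%:R + 1) * n%:R)).
Definition P21 : 'M[R]_n := phi%:M.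
Definition P22 : 'M[R]_n := const_mx ((1 - phi) / n%:R).

Definition Pmat (s : state) : 'M[R]_(n + n) := block_mx (P11 s) (P12 s) P21 P22.

Definition Pt (x0 y0 : 'I_n -> R) (t : nat) : 'M[R]_(n + n) := Pmat (traj x0 y0 t).

End OpinionAction.

Definition graph_edge (R : realType) (m : nat) (A : 'M[R]_m) : rel 'I_m :=
  fun j i => 0 < A i j.

Definition strongly_connected (R : realType) (m : nat) (A : 'M[R]_m) : Prop :=
  forall i j : 'I_m, connect (graph_edge A) i j.

(* After time T every agent i has a neighbour: otherwise the node x_i of
   G(P(t)) has no in-edge but its own loop and cannot be reached from y_i.
   Each new opinion and each new action is then a convex combination of
   current values putting weight at least d = (1 - phi) / 2 on the previous
   average action a(t). Hence if every entry of z(t+1) lies in [l, h] (and so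
   does a(t)), every entry of z(t+2) lies in [d a(t) + (1 - d) l,
   d a(t) + (1 - d) h]. Starting from a bound [-B, B] on z(T), the two
   envelopes are exponential smoothings of the same input a with gap
   (1 - d)^k 2B; the lower one increases, the upper one decreases, and every
   z_i is squeezed to their common limit. *)

From HB Require Import structures.
From mathcomp Require Import all_boot all_order all_algebra.
From mathcomp Require Import all_classical all_reals all_analysis.
From mathcomp Require Import ring lra zify.

Set Implicit Arguments. Unset Strict Implicit. Unset Printing Implicit Defensive.
Import Order.TTheory GRing.Theory Num.Theory.
Import numFieldTopology.Exports numFieldNormedType.Exports.
Local Open Scope classical_set_scope.
Local Open Scope ring_scope.

Lemma connect_in_isolated (T : finType) (e : rel T) (b : T) :
  (forall a, e a b -> a = b) -> forall a, connect e a b -> a = b.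
Proof.
move=> in_b a /connectP [p]; elim: p a => [|c p IHp] a //= /andP [eac pc] last_p.
by move: eac; rewrite (IHp c pc last_p); apply: in_b.
Qed.

Lemma sum_within (R : numDomainType) (I : finType) (A : {pred I}) (f : I -> R)
    (lo hi : R) :
  (forall j, lo <= f j <= hi) -> #|A|%:R * lo <= \sum_(j in A) f j <= #|A|%:R * hi.
Proof.
move=> f_within; rewrite !mulr_natl -!sumr_const.
by apply/andP; split; apply: ler_sum => j _; case/andP: (f_within j).
Qed.

Lemma mean_within (R : numFieldType) (n : nat) (f : 'I_n -> R) (lo hi : R) :
  (0 < n)%N -> (forall j, lo <= f j <= hi) -> lo <= (\sum_j f j) / n%:R <= hi.
Proof.
move=> n_gt0 /(@sum_within _ _ 'I_n); rewrite card_ord => /andP [sum_lo sum_hi].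
have n_pos : 0 < n%:R :> R by rewrite ltr0n.
by rewrite ler_pdivlMr // ler_pdivrMr // ![_ * n%:R]mulrC sum_lo sum_hi.
Qed.

Lemma mix_within (R : realDomainType) (d w a u lo hi : R) :
  0 <= d -> d <= w -> w <= 1 -> lo <= a <= hi -> lo <= u <= hi ->
  d * a + (1 - d) * lo <= w * a + (1 - w) * u <= d * a + (1 - d) * hi.
Proof.
move=> d_ge0 d_le_w w_le1 /andP [lo_a a_hi] /andP [lo_u u_hi].
by apply/andP; split; nra.
Qed.

Fixpoint expsmooth (R : realType) (d : R) (a : nat -> R) (b : R) (k : nat) : R :=
  if k is k'.+1 then d * a k' + (1 - d) * expsmooth d a b k' else b.

Lemma expsmooth_gap (R : realType) (d : R) (a : nat -> R) (b b' : R) (k : nat) :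
  expsmooth d a b' k = expsmooth d a b k + (1 - d) ^+ k * (b' - b).
Proof.
by elim: k => [|k /= ->]; [rewrite expr0 mul1r addrC subrK | rewrite exprS; ring].
Qed.

Section ExpSmoothSqueeze.
Variables (R : realType) (d : R) (a : nat -> R) (lo0 hi0 : R).
Hypotheses (d_gt0 : 0 < d) (d_lt1 : d < 1).
Local Notation lo := (expsmooth d a lo0).
Local Notation hi := (expsmooth d a hi0).
Hypothesis a_within : forall k, lo k <= a k <= hi k.

Lemma expsmooth_lo_nondecreasing : nondecreasing_seq lo.
Proof.
apply/nondecreasing_seqP => k /=; have /andP [lo_a _] := a_within k.
have := ler_wpM2l (ltW d_gt0) lo_a; lra.
Qed.

Lemma expsmooth_hi_le k : hi k <= hi0.
Proof.
elim: k => //= k; have /andP [_ a_hi] := a_within k.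
have := ler_wpM2l (ltW d_gt0) a_hi; lra.
Qed.

Lemma expsmooth_lo_cvg : lo @ \oo --> limn lo.
Proof.
apply/cvg_ex; exists (sup (range lo)); apply: nondecreasing_cvgn.
  exact: expsmooth_lo_nondecreasing.
exists hi0 => _ [k _ <-]; have /andP [lo_a a_hi] := a_within k.
exact: le_trans lo_a (le_trans a_hi (expsmooth_hi_le k)).
Qed.

Lemma expsmooth_hi_cvg : hi @ \oo --> limn lo.
Proof.
have -> : hi = (fun k => lo k + (1 - d) ^+ k * (hi0 - lo0)).
  by apply/funext => k; rewrite (expsmooth_gap _ _ lo0).
rewrite -[limn lo]addr0; apply: cvgD; first exact: expsmooth_lo_cvg.
rewrite -(mul0r (hi0 - lo0)); apply: cvgMr_tmp; apply: cvg_expr.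
by rewrite ger0_norm ?subr_ge0 ?(ltW d_lt1) // gtrDl oppr_lt0.
Qed.

Lemma expsmooth_squeeze (u : nat -> R) :
  (forall k, lo k <= u k <= hi k) -> u @ \oo --> limn lo.
Proof.
move=> u_within; apply: (squeeze_cvgr _ expsmooth_lo_cvg expsmooth_hi_cvg).
by near=> k; exact: u_within.
Unshelve. all: end_near.
Qed.

End ExpSmoothSqueeze.

Section OpinionAction.
Variables (R : realType) (n : nat) (eps phi : R).
Local Notation d := ((1 - phi) / 2).

Lemma nbhd_mean_within (x : 'I_n -> R) (N : {set 'I_n}) i (a lo hi : R) :
  0 < phi -> phi < 1 -> (0 < #|N|)%N -> (forall j, lo <= x j <= hi) -> lo <= a <= hi ->
  d * a + (1 - d) * lo <=
    (x i + \sum_(j in N) (phi * x j + (1 - phi) * a)) / (#|N|%:R + 1) <=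
  d * a + (1 - d) * hi.
Proof.
move=> phi_gt0 phi_lt1 N_gt0 x_within a_within.
have d_ge0 : 0 <= d by lra.
rewrite big_split /= -mulr_sumr sumr_const -[_ *+ #|N|]mulr_natl.
have /andP [S_lo S_hi] := sum_within N x_within.
set c := #|N|%:R in S_lo S_hi *; set S := \sum_(j in N) x j in S_lo S_hi *.
have c_ge1 : 1 <= c by rewrite ler1n.
clearbody c S.
have /andP [xi_lo xi_hi] := x_within i.
have phiS_lo := ler_wpM2l (ltW phi_gt0) S_lo.
have phiS_hi := ler_wpM2l (ltW phi_gt0) S_hi.
have c1_pos : 0 < c + 1 by lra.
have phic_pos : 0 < 1 + phi * c.
  by rewrite ltr_wpDr ?mulr_ge0 // ltW // (lt_le_trans ltr01 c_ge1).
have u_within : lo <= (x i + phi * S) / (1 + phi * c) <= hi.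
  by rewrite ler_pdivlMr // ler_pdivrMr //; apply/andP; split; lra.
have -> : (x i + (phi * S + c * ((1 - phi) * a))) / (c + 1) =
    (1 - phi) * c / (c + 1) * a + (1 - (1 - phi) * c / (c + 1)) *
    ((x i + phi * S) / (1 + phi * c)).
  by field; rewrite (gt_eqF c1_pos) (gt_eqF phic_pos).
have d_le_w : d <= (1 - phi) * c / (c + 1).
  by rewrite ler_pdivlMr // mulrAC ler_pdivrMr // -mulrA ler_pM2l ?subr_gt0 //; lra.
have w_le1 : (1 - phi) * c / (c + 1) <= 1 by rewrite ler_pdivrMr //; lra.
exact: mix_within.
Qed.

Lemma card_nbhd_gt0 (s : state R n) (i : 'I_n) :
  strongly_connected (Pmat eps phi s) -> (0 < #|nbhd eps s i|)%N.
Proof.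
move=> s_sc; rewrite lt0n; apply/negP => /eqP /cards0_eq nbhd0.
have x_in_isolated a : graph_edge (Pmat eps phi s) a (lshift n i) -> a = lshift n i.
  rewrite /graph_edge /Pmat -(splitK a); case: (fintype.split a) => j /=.
    rewrite block_mxEul /P11 mxE nbhd0 inE; case: eqP => [-> //|_]; by rewrite ltxx.
  by rewrite block_mxEur /P12 mxE nbhd0 cards0 mulr0 mul0r ltxx.
have := connect_in_isolated x_in_isolated (s_sc (rshift n i) (lshift n i)).
by move/(congr1 val) => /=; have := ltn_ord i; lia.
Qed.

Lemma step_within_toward_yavg (s : state R n) (lo hi : R) :
  0 < phi -> phi < 1 -> (0 < n)%N ->
  (forall i, 0 < #|nbhd eps (step eps phi s) i|)%N ->
  (forall i, lo <= (step eps phi s).1 i <= hi) -> (forall j, lo <= s.2 j <= hi) ->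
  (forall i, d * yavg s + (1 - d) * lo <= (step eps phi (step eps phi s)).1 i <=
             d * yavg s + (1 - d) * hi) /\
  (forall j, d * yavg s + (1 - d) * lo <= (step eps phi s).2 j <=
             d * yavg s + (1 - d) * hi).
Proof.
move=> phi_gt0 phi_lt1 n_gt0 nbhd_gt0 x_within y_within.
have a_within : lo <= yavg s <= hi := mean_within n_gt0 y_within.
split=> i; first exact: nbhd_mean_within.
have -> : (step eps phi s).2 i =
    (1 - phi) * yavg s + (1 - (1 - phi)) * (step eps phi s).1 i by rewrite /=; ring.
have d_ge0 : 0 <= d by lra.
have d_le : d <= 1 - phi by lra.
have w_le1 : 1 - phi <= 1 by lra.
exact: mix_within.
Qed.

Variables (x0 y0 : 'I_n -> R).
Local Notation traj := (traj eps phi x0 y0).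
Local Notation z := (zstate eps phi x0 y0).

Lemma zstateS_within (t : nat) (lo hi : R) :
  (forall k, lo <= z t.+1 k <= hi) <->
  (forall i, lo <= (traj t.+1).1 i <= hi) /\ (forall j, lo <= (traj t).2 j <= hi).
Proof.
split=> [z_within | [x_within y_within] k].
  split=> i; [have := z_within (lshift n i) | have := z_within (rshift n i)];
  by rewrite /zstate ?(unsplitK (inl i)) ?(unsplitK (inr i)).
by rewrite /zstate; case: (fintype.split k).
Qed.

Variables (t0 : nat) (lo0 hi0 : R).
Hypotheses (phi_gt0 : 0 < phi) (phi_lt1 : phi < 1) (n_gt0 : (0 < n)%N).
Hypothesis P_sc : forall t, (t0 < t)%N -> strongly_connected (Pt eps phi x0 y0 t).
Hypothesis z0_within : forall k, lo0 <= z t0.+1 k <= hi0.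
Local Notation a := (fun k => yavg (traj (t0 + k))).

Lemma zstate_within_expsmooth k kk :
  expsmooth d a lo0 k <= z (t0 + k).+1 kk <= expsmooth d a hi0 k.
Proof.
elim: k kk => [|k IHk]; first by rewrite addn0.
rewrite addnS; apply/zstateS_within; move/zstateS_within: IHk => [x_within y_within].
have nbhd_gt0 i : (0 < #|nbhd eps (traj (t0 + k).+1) i|)%N.
  by apply: card_nbhd_gt0; apply: P_sc; rewrite ltnS leq_addr.
exact: step_within_toward_yavg phi_gt0 phi_lt1 n_gt0 nbhd_gt0 x_within y_within.
Qed.

Lemma zstate_cvg_expsmooth kk :
  (fun t => z t kk) @ \oo --> limn (expsmooth d a lo0).
Proof.
have a_within k : expsmooth d a lo0 k <= a k <= expsmooth d a hi0 k.
  by have /zstateS_within [_ /(mean_within n_gt0)] := zstate_within_expsmooth k.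
have d_gt0 : 0 < d by have := phi_lt1; lra.
have d_lt1 : d < 1 by have := phi_gt0; lra.
rewrite -(cvg_shiftn t0.+1); apply: (expsmooth_squeeze d_gt0 d_lt1 a_within) => k.
by rewrite /= addnS addnC; apply: zstate_within_expsmooth.
Qed.

End OpinionAction.

Theorem proposition2 (R : realType) (n : nat) (eps phi : R) (x0 y0 : 'I_n -> R)
  (T : nat) :
  (1 <= n)%N ->
  0 <= eps <= 1 ->
  0 < phi < 1 ->
  (forall i, 0 <= x0 i <= 1) ->
  (forall i, 0 <= y0 i <= 1) ->
  (0 < T)%N ->
  (forall t : nat, (T <= t)%N -> strongly_connected (Pt eps phi x0 y0 t)) ->
  (forall k : 'I_(n + n), cvgn (fun t => zstate eps phi x0 y0 t k)) /\
  (forall k l : 'I_(n + n),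
     limn (fun t => zstate eps phi x0 y0 t k) = limn (fun t => zstate eps phi x0 y0 t l)).
Proof.
(* The bounds on eps and on the initial values are not needed: any bound on
   z(T) starts the squeeze. *)
move=> n_gt0 _ /andP [phi_gt0 phi_lt1] _ _; case: T => // t0 _ P_sc.
pose B := \sum_k `|zstate eps phi x0 y0 t0.+1 k|.
have zT_within k : - B <= zstate eps phi x0 y0 t0.+1 k <= B.
  by rewrite -ler_norml /B (bigD1 k) //= lerDl sumr_ge0.
have z_cvg := zstate_cvg_expsmooth phi_gt0 phi_lt1 n_gt0 P_sc zT_within.
split=> [k | k l]; first exact: cvgP (z_cvg k).
by rewrite (cvg_lim _ (z_cvg k)) ?(cvg_lim _ (z_cvg l)).
Qed.
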